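(* Let $n\ge 2$ and let $p, p', s \in B_{n}$, regarded as elements of $B_{n+1}$ via the standard inclusion. Then $$p' = s*p \quad \text{in } B_{n+1}$$ if and only if $$p'\, \delta_{n+1}^{-1} = s \cdot d(p)\, \sigma_1\, \delta_{n+1}^{-1} \cdot s^{-1} \quad \text{in } B_{n+1}.$$
   Context: $B_m$ denotes the braid group on $m$ strands with Artin generators $\sigma_1,\dots,\sigma_{m-1}$ and relations $\sigma_i\sigma_j\sigma_i=\sigma_j\sigma_i\sigma_j$ for $|i-j|=1$, $\sigma_i\sigma_j=\sigma_j\sigma_i$ for $|i-j|>1$; $B_\infty$ is the braid group on generators $\sigma_1,\sigma_2,\dots$ with the same relations, and $B_m\subset B_{m+1}\subset B_\infty$ via the generators. The shift $d$ is the monomorphism of $B_\infty$ induced by $\sigma_{i_1}^{\varepsilon_1}\cdots\sigma_{i_k}^{\varepsilon_k}\mapsto \sigma_{i_1+1}^{\varepsilon_1}\cdots\sigma_{i_k+1}^{\varepsilon_k}$. The shifted conjugacy operator is $a*b = a\cdot d(b)\cdot \sigma_1\cdot d(a^{-1})$ for $a,b\in B_\infty$. Also $\delta_{n+1} = \sigma_{n}\sigma_{n-1}\cdots\sigma_1 \in B_{n+1}$. *)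

From mathcomp Require Import all_boot.
Set Implicit Arguments. Unset Strict Implicit. Unset Printing Implicit Defensive.

(* A letter (i, true) is sigma_i, (i, false) is sigma_i^{-1}. *)
Definition letter := (nat * bool)%type.
Definition word := seq letter.

Definition sig (i : nat) : letter := (i, true).
Definition sig_inv (i : nat) : letter := (i, false).

Definition winv (w : word) : word := rev (map (fun l => (l.1, ~~ l.2)) w).

Definition shift (w : word) : word := map (fun l => (l.1.+1, l.2)) w.

(* equality in B_m : congruence generated by free cancellation and the
   braid relations among sigma_1, ..., sigma_{m-1} *)
Inductive beq (m : nat) : word -> word -> Prop :=
| beq_refl w : beq m w w
| beq_sym u v : beq m u v -> beq m v u
| beq_trans u v w : beq m u v -> beq m v w -> beq m u w
| beq_cat u1 u2 v1 v2 : beq m u1 u2 -> beq m v1 v2 -> beq m (u1 ++ v1) (u2 ++ v2)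
| beq_cancel i b : beq m [:: (i, b); (i, ~~ b)] [::]
| beq_braid i : 0 < i -> i.+1 < m ->
    beq m [:: sig i; sig i.+1; sig i] [:: sig i.+1; sig i; sig i.+1]
| beq_comm i j : 0 < i -> i.+1 < j -> j < m ->
    beq m [:: sig i; sig j] [:: sig j; sig i].

Definition in_B (n : nat) (w : word) : bool := all (fun l => 0 < l.1 < n) w.

Definition sconj (a b : word) : word :=
  a ++ shift b ++ [:: sig 1] ++ shift (winv a).

(* delta_{n+1} = sigma_n sigma_{n-1} ... sigma_1 *)
Definition delta (n1 : nat) : word := [seq sig i | i <- rev (iota 1 n1.-1)].

(** Conjugation by δ_{n+1} = σ_n ⋯ σ_1 realizes the shift on B_n: for w in B_n,
    w δ = δ d(w) in B_{n+1}, since σ_i δ = δ σ_{i+1} for 0 < i < n.  Hence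
    d(s^{-1}) = δ^{-1} s^{-1} δ and s*p = (s d(p) σ_1 δ^{-1} s^{-1}) δ, and the
    equivalence is obtained by cancelling δ.  Only s has to lie in B_n. *)

From mathcomp Require Import all_boot zify.
From Stdlib Require Import Setoid Morphisms.

#[local] Hint Resolve beq_refl : core.

Lemma winvK : involutive winv.
Proof.
move=> w; rewrite /winv map_rev revK -map_comp -[RHS]map_id.
by apply: eq_map => -[i b] /=; rewrite negbK.
Qed.

Lemma in_B_winv n w : in_B n w -> in_B n (winv w).
Proof. by rewrite /in_B /winv all_rev all_map. Qed.

Add Parametric Relation m : word (beq m)
  reflexivity proved by (@beq_refl m)
  symmetry proved by (@beq_sym m)
  transitivity proved by (@beq_trans m) as beq_rel.

Add Parametric Morphism m : (@cat letter)
  with signature beq m ==> beq m ==> beq m as cat_beq.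
Proof. by move=> u1 u2 Hu v1 v2 Hv; apply: beq_cat. Qed.

Add Parametric Morphism m (x : letter) : (cons x)
  with signature beq m ==> beq m as cons_beq.
Proof. by move=> u v Huv; rewrite -(cat1s x u) -(cat1s x v) Huv. Qed.

Section BraidGroupLaws.
Variable m : nat.

Lemma beq_cat_winv w : beq m (w ++ winv w) [::].
Proof.
elim: w => [|[i b] w IH] //=.
rewrite /winv /= rev_cons -cats1 -/(winv w) catA IH /=.
exact: beq_cancel.
Qed.

Lemma beq_winv_cat w : beq m (winv w ++ w) [::].
Proof. by rewrite -{2}(winvK w) beq_cat_winv. Qed.

Lemma beq_cat_winvE u v w : beq m (u ++ winv w) v <-> beq m u (v ++ w).
Proof.
split=> [<- | ->]; first by rewrite -catA beq_winv_cat cats0.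
by rewrite -catA beq_cat_winv cats0.
Qed.

Lemma beq_conj_winv x y D : beq m (x :: D) (D ++ [:: y]) ->
  beq m (winv [:: x] ++ D) (D ++ winv [:: y]).
Proof.
move=> xD; symmetry; apply/beq_cat_winvE.
by rewrite -catA -xD -(cat1s x D) catA beq_winv_cat.
Qed.

Lemma sig_comm i j : 0 < i < m -> 0 < j < m -> (i.+1 < j) || (j.+1 < i) ->
  beq m [:: sig i; sig j] [:: sig j; sig i].
Proof.
move=> /andP[i0 im] /andP[j0 jm] /orP[ij | ji]; first exact: beq_comm.
by symmetry; apply: beq_comm.
Qed.

Lemma sig_comm_seq i l : 0 < i < m ->
  all (fun j => (0 < j < m) && ((i.+1 < j) || (j.+1 < i))) l ->
  beq m (sig i :: map sig l) (map sig l ++ [:: sig i]).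
Proof.
move=> im; elim: l => [|j l IH] //= /andP[/andP[jm far_ij] far_il].
rewrite -(cat1s (sig j)) -IH //= -[_ :: _ :: _]/([:: sig i; sig j] ++ _).
by rewrite sig_comm.
Qed.

End BraidGroupLaws.

Section DeltaConjugation.
Variable n : nat.
Local Notation D := (delta n.+1).

Lemma delta_split i : 0 < i < n ->
  D = map sig (rev (iota i.+2 (n - i.+1))) ++ [:: sig i.+1; sig i]
      ++ map sig (rev (iota 1 i.-1)).
Proof.
move=> /andP[i0 lin]; rewrite /delta /=.
have -> : n = i.-1 + (2 + (n - i.+1)) by lia.
rewrite !iotaD !rev_cat !map_cat /= -!catA; congr (_ ++ _).
- by congr (map _ (rev (iota _ _))); lia.
- by rewrite add1n (ltn_predK i0).
Qed.

Lemma sig_delta i : 0 < i < n -> beq n.+1 (sig i :: D) (D ++ [:: sig i.+1]).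
Proof.
move=> /[dup] lin /andP[i0 ltin]; rewrite (delta_split i lin).
set A := map sig (rev (iota i.+2 _)); set B := map sig (rev (iota 1 _)).
have commA : beq n.+1 (sig i :: A) (A ++ [:: sig i]).
  apply: sig_comm_seq; first lia.
  rewrite all_rev; apply/allP => j.
  by rewrite mem_iota => /andP[? ?]; apply/andP; split; lia.
have commB : beq n.+1 (sig i.+1 :: B) (B ++ [:: sig i.+1]).
  apply: sig_comm_seq; first lia.
  rewrite all_rev; apply/allP => j.
  by rewrite mem_iota => /andP[? ?]; apply/andP; split; lia.
have braid : beq n.+1 [:: sig i; sig i.+1; sig i] [:: sig i.+1; sig i; sig i.+1].
  by apply: beq_braid; lia.
rewrite -(cat_cons (sig i) A) commA !catA -!catA /=.
by rewrite -[sig i :: _ :: _ :: B]/([:: sig i; sig i.+1; sig i] ++ B) braid /= -commB.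
Qed.

Lemma letter_delta i b : 0 < i < n ->
  beq n.+1 ((i, b) :: D) (D ++ [:: (i.+1, b)]).
Proof.
case: b => lin; first exact: sig_delta.
by apply: (beq_conj_winv _ (sig i) (sig i.+1)); apply: sig_delta.
Qed.

Lemma cat_delta w : in_B n w -> beq n.+1 (w ++ D) (D ++ shift w).
Proof.
elim: w => [|[i b] w IH] /=; first by rewrite cats0.
move=> /andP[lin /IH ->].
by rewrite -cat_cons letter_delta // -catA.
Qed.

Lemma shift_delta_conj w : in_B n w ->
  beq n.+1 (shift w) (winv D ++ w ++ D).
Proof. by move/cat_delta->; rewrite catA beq_winv_cat. Qed.

End DeltaConjugation.

Theorem proposition1 (n : nat) (p p' s : word) :
  2 <= n -> in_B n p -> in_B n p' -> in_B n s ->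
  (beq n.+1 p' (sconj s p) <->
   beq n.+1 (p' ++ winv (delta n.+1))
            (s ++ shift p ++ [:: sig 1] ++ winv (delta n.+1) ++ winv s)).
Proof.
move=> _ _ _ /in_B_winv/(shift_delta_conj n) shift_sV.
by rewrite beq_cat_winvE /sconj shift_sV !catA.
Qed.
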